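(* Assume the setting of the context and suppose that condition (A1)(d) holds. Then for any compact interval $I\subset(0,\infty)$, $x\in F$ and $r>0$, \[\lim_{n\rightarrow\infty}\mathbf{P}_{\rho}^{G^n}\left(X^n_{\lfloor \gamma(n)t\rfloor+i}\in B_E(x,r)\right)=\int_{B_F(x,r)}q_t(y)\nu(dy)\] uniformly for $t\in I$, $i\in\{0,1\}$.
   Context: Let $(E,d_E)$ be a metric space and $F\subseteq E$ such that $F\cap\overline{B}_E(x,r)$ is compact for all $x\in E$, $r>0$ ($\overline{B}_E$, $B_E$ closed and open balls in $E$). Let $d_F:=d_E|_{F\times F}$, $B_F(x,r)$ the open ball in $(F,d_F)$, $\rho\in F$, $\nu$ a Radon measure of full support on $(F,d_F)$ (extended to $E$ by $\nu(A):=\nu(A\cap F)$), and $(q_t(x))_{x\in F,t>0}$ jointly continuous in $(t,x)$ with $q_t\ge0$, $\int_Fq_t\,d\nu=1$. For a locally finite connected graph $G$ with symmetric edge weights $\mu^G_{xy}$ ($>0$ iff $\{x,y\}$ is an edge), the discrete time simple random walk $X^G$ has transition probabilities $P_G(x,y)=\mu^G_{xy}/\sum_z\mu^G_{xz}$ and law $\mathbf{P}^G_x$ from $x$. Let $(G^n)_{n\ge1}$ be locally finite connected graphs with at least two vertices, $V(G^n)\subseteq E$, distinguished vertex $\rho$; write $X^n:=X^{G^n}$. Let $(\gamma(n))$ be a non-negative sequence diverging to $\infty$. Condition (A1)(d): for every compact interval $I\subset(0,\infty)$, $x\in F$, $r>0$, $\lim_n\mathbf{P}^{G^n}_\rho(X^n_{\lfloor\gamma(n)t\rfloor}\in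 B_E(x,r))=\int_{B_F(x,r)}q_t(y)\nu(dy)$ uniformly for $t\in I$. *)

From HB Require Import structures.
From mathcomp Require Import all_boot all_order all_algebra.
From mathcomp Require Import all_classical all_reals all_analysis.
From Stdlib Require Import Relation_Operators.
Set Implicit Arguments. Unset Strict Implicit. Unset Printing Implicit Defensive.
Import Order.TTheory GRing.Theory Num.Theory.
Local Open Scope classical_set_scope.
Local Open Scope ring_scope.

(** A metric space with a distinguished point (needed only so that the
    library's generated sigma-algebra applies; E is nonempty anyway since it
    contains rho). *)
#[short(type="pointedMetricType")]
HB.structure Definition PointedMetric (K : numDomainType) :=
  { M of Metric K M & isPointed M }.

Notation borel_of E := (g_sigma_algebraType (@open E)).

Definition cball (R : realType) (E : pointedMetricType R) (x : E) (r : R) : set E :=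
  [set y | mdist x y <= r].

(** Radon measure of full support on (F, d_F), viewed (as in the paper)
    as a measure on E via nu(A) := nu(A ∩ F):
    - nu is concentrated on F (extension convention);
    - locally finite: every x in F has an open ball B_F(x,r) of finite mass;
    - inner regular: nu(A) = sup { nu(K) : K compact, K ⊆ A ∩ F };
    - full support: every nonempty open ball B_F(x,r) (x in F) has positive mass. *)
Definition radon_full_support (R : realType) (E : pointedMetricType R) (F : set E)
    (nu : {measure set (borel_of E) -> \bar R}) : Prop :=
  [/\ (forall A : set (borel_of E), measurable A -> nu A = nu (A `&` F)),
      (forall x, F x -> exists2 r : R, 0 < r & (nu (ball x r `&` F) < +oo)%E),
      (forall A : set (borel_of E), measurable A ->
         nu A = ereal_sup [set nu K | K in
                 [set K : set (borel_of E) | K `<=` A `&` F /\ @compact E K]]) &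
      (forall x (r : R), F x -> 0 < r -> (0 < nu (ball x r `&` F))%E)].

(** Locally finite connected weighted graph with vertices in E, given by
    the vertex set V, symmetric weights mu (mu x y > 0 iff {x,y} is an edge)
    and, for each vertex x, the (duplicate-free, finite) list nbr x of its
    neighbours (local finiteness). *)
Definition adjacent (R : realType) (E : Type) (mu : E -> E -> R) (x y : E) : Prop :=
  0 < mu x y.

Definition weighted_graph (R : realType) (E : eqType) (V : set E)
    (mu : E -> E -> R) (nbr : E -> seq E) : Prop :=
  [/\ (forall x y, mu x y = mu y x),
      (forall x y, 0 <= mu x y),
      (forall x y, 0 < mu x y -> V x /\ V y),
      (forall x y, V x -> (0 < mu x y <-> y \in nbr x)) &
      (forall x, uniq (nbr x))].

Definition graph_connected (R : realType) (E : Type) (V : set E) (mu : E -> E -> R) : Prop :=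
  forall x y, V x -> V y -> clos_refl_trans E (adjacent mu) x y.

Definition at_least_two_vertices (E : Type) (V : set E) : Prop :=
  exists x y, [/\ V x, V y & x <> y].

Definition trans_prob (R : realType) (E : eqType) (mu : E -> E -> R)
    (nbr : E -> seq E) (x y : E) : R :=
  mu x y / \sum_(z <- nbr x) mu x z.

(** P^G_x (X^G_k ∈ A), the law of the discrete-time simple random walk,
    defined through the Markov (Chapman–Kolmogorov) recursion on the
    first step. *)
Fixpoint walk_prob (R : realType) (E : eqType) (mu : E -> E -> R)
    (nbr : E -> seq E) (k : nat) (x : E) (A : set E) : R :=
  match k with
  | 0 => (x \in A)%:R
  | k'.+1 => \sum_(z <- nbr x) trans_prob mu nbr x z * walk_prob mu nbr k' z A
  end.

From HB Require Import structures.
From mathcomp Require Import all_boot all_order all_algebra.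
From mathcomp Require Import all_classical all_reals all_analysis.
From mathcomp Require Import measurable_realfun ring lra.
Import Order.TTheory GRing.Theory Num.Theory.
Import numFieldTopology.Exports.
Local Open Scope classical_set_scope.
Local Open Scope ring_scope.

(** The case [i = 1] reduces to [i = 0]: [truncn (gamma n * t) + 1 = truncn (gamma n * t')]
    for [t' = t + 1 / gamma n], so (A1)(d) on the larger interval [[a, b + 1]] controls the
    walk at time [t'], and it remains to move the limit from [t'] back to [t]. This costs
    nothing, uniformly in [t], because [t |-> \int_{B_F(x,r)} q_t dnu] is uniformly
    continuous on [[a, b + 1]]: [q] is uniformly continuous in [t] on the compact set
    [[a, b + 1] x (F ∩ B̄(x,r))], and [nu(B_F(x,r))] is finite since [nu] is Radon. *)

Lemma metric_ball_open (R : realType) (E : metricType R) (x : E) (r : R) : open (ball x r).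
Proof.
rewrite openE => y; rewrite /interior ballEmdist /= => xy.
apply/nbhs_ballP; exists (r - mdist x y) => /=; first by rewrite subr_gt0.
move=> z; rewrite !ballEmdist /= => yz.
have := metric_triangle x y z; lra.
Qed.

Section borel_metric.
Context (R : realType) (E : pointedMetricType R).

Lemma borel_open_measurable (A : set (borel_of E)) : open (A : set E) -> measurable A.
Proof. exact: sub_sigma_algebra. Qed.

Lemma borel_compact_measurable (A : set (borel_of E)) : compact (A : set E) -> measurable A.
Proof.
move=> /(compact_closed (@metric_hausdorff _ _)) /closed_openC /borel_open_measurable.
by move=> /measurableC; rewrite setCK.
Qed.

Lemma borel_continuous_measurable_fun (D : set (borel_of E)) (f : E -> R) :
  measurable D -> {within (D : set E), continuous f} ->
  measurable_fun D (f : borel_of E -> R).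
Proof.
move=> mD /continuousP cf.
apply: (measurability _ (RGenOpens.measurableE R)) => _ [_ [a [b ->] <-]].
have [U oU UD] := (open_subspaceP (D : set E) _).1
  (cf _ (@interval_open R (BRight a) (BLeft b) isT isT)).
by rewrite setIC -UD; apply: measurableI => //; exact: borel_open_measurable.
Qed.

Lemma proper_set_measurable (F : set E) :
  (forall x (r : R), 0 < r -> compact (F `&` cball x r)) ->
  measurable (F : set (borel_of E)).
Proof.
move=> F_proper.
have -> : F = \bigcup_n (F `&` cball point n.+1%:R).
  apply/seteqP; split => [y Fy|y [n _ []//]].
  exists (Num.truncn (mdist point y)) => //; split => //.
  by have /andP[_ /ltW] := truncn_itv (mdist_ge0 point y).
by apply: bigcupT_measurable => n; apply: borel_compact_measurable; exact: F_proper.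
Qed.

End borel_metric.

Lemma radon_compact_lty (R : realType) (E : pointedMetricType R) (F : set E)
    (nu : {measure set (borel_of E) -> \bar R}) (K : set E) (A : set (borel_of E)) :
  radon_full_support F nu -> compact K -> K `<=` F ->
  measurable A -> A `<=` K -> (nu A < +oo)%E.
Proof.
case=> nuF nu_loc _ _ cK KF mA AK.
have /choice[rad rad_fin] : forall y, exists r : R, K y ->
    0 < r /\ (nu (ball y r) < +oo)%E.
  move=> y.
  have [Ky|] := pselect (K y); last by exists 1.
  have [r r0 fin] := nu_loc y (KF y Ky).
  by exists r => _; rewrite nuF //; apply: borel_open_measurable; exact: metric_ball_open.
move: cK; rewrite compact_cover => /(_ E K (fun y => ball y (rad y))).
case=> [y _|y Ky|D DK Dcover]; first exact: metric_ball_open.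
  by exists y => //; apply: ballxx; exact: (rad_fin y Ky).1.
apply: (le_lt_trans (content_sub_fsum nu (A_ := fun y => ball y (rad y))
  (finite_fset D) _ mA _)).
- by move=> y _; apply: borel_open_measurable; exact: metric_ball_open.
- by move=> z /AK /Dcover.
rewrite fsbig_finite ?finite_fset //= big_seq; apply: lte_sum_pinfty => y.
by rewrite in_fset_set ?finite_fset // inE /= => /DK; rewrite inE => /rad_fin[].
Qed.

Section within_continuous_pair.
Context (R : realType) (E : metricType R) (S : set R) (F : set E) (f : R -> E -> R).
Hypothesis f_cont :
  {within [set p : R * E | S p.1 /\ F p.2], continuous (fun p => f p.1 p.2)}.

Lemma within_continuous_pair_dist t y : S t -> F y ->
  forall e, 0 < e -> exists2 d, 0 < d & forall t' y', S t' -> F y' ->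
    `|t - t'| < d -> mdist y y' < d -> `|f t y - f t' y'| < e.
Proof.
move=> St Fy e e0; have := (subspace_continuousP _ _).1 f_cont (t, y) (conj St Fy).
move=> /cvgrPdist_lt /(_ e e0) /nbhs_ballP[d d0 dclose].
exists d => // t' y' St' Fy' tt' yy'; apply: (dclose (t', y')) => //.
by split => //=; rewrite ballEmdist.
Qed.

Lemma within_continuous_pair_section t : S t -> {within F, continuous (f t)}.
Proof.
move=> St; apply/subspace_continuousP => y Fy; apply/cvgrPdist_lt => e e0.
have [d d0 close] := within_continuous_pair_dist _ _ St Fy _ e0.
apply/nbhs_ballP; exists d => // y' yy' Fy'; apply: close => //.
  by rewrite subrr normr0.
by move: yy'; rewrite ballEmdist.
Qed.

Lemma within_continuous_pair_unif_fst (a b : R) (K : set E) :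
  (forall t, a <= t <= b -> S t) -> compact K -> K `<=` F ->
  forall e, 0 < e -> exists2 d, 0 < d & forall t s y, a <= t <= b -> a <= s <= b ->
    K y -> `|t - s| < d -> `|f t y - f s y| < e.
Proof.
move=> abS cK KF e e0.
pose P d (p : R * E) := forall s, a <= s <= b -> `|p.1 - s| < d ->
  `|f p.1 p.2 - f s p.2| < e.
suff: \forall d \near 0^'+, `[a, b] `*` K `<=` P d.
  move=> /(filterI (nbhs_right_gt 0)) /filter_ex[d [d0 Pd]].
  by exists d => // t s y ht hs Ky; apply: (Pd (t, y)).
(* Heine's argument: a near-covering of the compact [[a, b] x K] by the pairs
   (neighbourhood of a point, small enough [d]). *)
have /compact_near_coveringP/near_covering_withinP := compact_setX (@segment_compact R a b) cK.
apply => -[t0 y0] [/= ht0 Ky0].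
have e2 : 0 < e / 2 by lra.
have [eta eta0 close] := within_continuous_pair_dist _ _ (abS t0 ht0) (KF y0 Ky0) _ e2.
near=> p d => -[/= hp Kp] s hs hps.
have [/= tp yp] : ball (t0, y0) (eta / 2) p by near: p; apply: nbhsx_ballx; lra.
have d_small : d < eta / 2 by near: d; apply: nbhs_right_lt; lra.
rewrite ballEmdist /= in yp; rewrite /ball /= in tp.
have St := abS _ hp; have Ss := abS _ hs; have Fp := KF _ Kp.
have close_p : `|f t0 y0 - f p.1 p.2| < e / 2 by apply: close => //; lra.
have close_s : `|f t0 y0 - f s p.2| < e / 2.
  apply: close => //; last lra.
  by apply: le_lt_trans (ler_distD p.1 _ _) _; lra.
by apply: le_lt_trans (ler_distD (f t0 y0) _ _) _; rewrite distrC; lra.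
Unshelve. all: by end_near.
Qed.

End within_continuous_pair.

Lemma abse_integralB_le {d : measure_display} {T : measurableType d} {R : realType}
    (mu : {measure set T -> \bar R}) {D : set T} {f g : T -> R} {c : R} :
  measurable D -> mu.-integrable D (EFin \o f) -> mu.-integrable D (EFin \o g) ->
  (forall y, D y -> `|f y - g y| <= c) ->
  (`|\int[mu]_(y in D) (f y)%:E - \int[mu]_(y in D) (g y)%:E| <= c%:E * mu D)%E.
Proof.
move=> mD intf intg fg_le.
have /measurable_EFinP mf := measurable_int _ intf.
have /measurable_EFinP mg := measurable_int _ intg.
rewrite -integralB_EFin // -(integral_cst mu mD).
apply: le_trans (le_abse_integral mu mD _) _.
  by apply/measurable_EFinP; exact: measurable_funB.
apply: ge0_le_integral => //=.
by apply/measurable_EFinP; apply: measurableT_comp => //; exact: measurable_funB.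
Qed.

(* Only meaningful for [t > 0], where the integral is finite; [fine] returns [0] otherwise. *)
Definition kernel_ball_mass {R : realType} {E : pointedMetricType R} (F : set E)
    (nu : {measure set (borel_of E) -> \bar R}) (q : R -> E -> R) (x : E) (r t : R) : R :=
  fine (\int[nu]_(y in ball x r `&` F) (q t y)%:E).

Section kernel_ball_mass.
Context {R : realType} {E : pointedMetricType R} {F : set E}
  {nu : {measure set (borel_of E) -> \bar R}} {q : R -> E -> R}.
Hypotheses (F_proper : forall x (r : R), 0 < r -> compact (F `&` cball x r))
  (nu_radon : radon_full_support F nu)
  (q_cont : {within [set p : R * E | 0 < p.1 /\ F p.2],
              continuous (fun p : R * E => q p.1 p.2)})
  (q_ge0 : forall t y, 0 < t -> F y -> 0 <= q t y)
  (q_mass1 : forall t, 0 < t -> (\int[nu]_(y in F) (q t y)%:E = 1)%E).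
Context (x : E) (r : R).
Hypothesis r_gt0 : 0 < r.

Let B : set (borel_of E) := ball x r `&` F.

Let B_sub_cball : B `<=` F `&` cball x r.
Proof. by move=> y [xy Fy]; split => //; move: xy; rewrite ballEmdist => /ltW. Qed.

Let measurable_F : measurable (F : set (borel_of E)).
Proof. exact: proper_set_measurable. Qed.

Let measurable_B : measurable B.
Proof. by apply: measurableI => //; apply: borel_open_measurable; exact: metric_ball_open. Qed.

Let B_lty : (nu B < +oo)%E.
Proof.
by apply: radon_compact_lty nu_radon (F_proper x r r_gt0) _ measurable_B B_sub_cball => y [].
Qed.

Let integrable_kernel t : 0 < t -> nu.-integrable B (fun y => (q t y)%:E).
Proof.
move=> t0.
have mq : measurable_fun (F : set (borel_of E)) (EFin \o q t).
  apply/measurable_EFinP; apply: borel_continuous_measurable_fun => //.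
  exact: (@within_continuous_pair_section _ _ [set t | 0 < t] _ _ q_cont).
apply/integrableP; split; first by apply: measurable_funS mq => // y [].
rewrite (eq_integral (fun y : borel_of E => (q t y)%:E)); last first.
  by move=> y /set_mem[_ Fy] /=; rewrite ger0_norm // q_ge0.
apply: le_lt_trans (ge0_subset_integral _ _ _ mq _ _) _ => //.
- by move=> y Fy /=; rewrite lee_fin q_ge0.
- by move=> y [].
by rewrite q_mass1 // ltry.
Qed.

Local Notation mass := (kernel_ball_mass F nu q x r).

Lemma kernel_ball_massE t : 0 < t ->
  (\int[nu]_(y in B) (q t y)%:E)%E = (mass t)%:E.
Proof.
by move=> t0; rewrite fineK // (integrable_fin_num measurable_B (integrable_kernel _ t0)).
Qed.

Lemma kernel_ball_mass_unif_continuous a b : 0 < a ->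
  forall e, 0 < e -> exists2 d, 0 < d & forall t s, a <= t <= b -> a <= s <= b ->
    `|t - s| < d -> `|mass t - mass s| < e.
Proof.
move=> a0 e e0.
have [nuB nuBE] : exists nuB : R, nu B = nuB%:E.
  by exists (fine (nu B)); rewrite fineK // ge0_fin_numE.
have nuB0 : 0 <= nuB by rewrite -lee_fin -nuBE.
pose c := e / (2 * (nuB + 1)).
have c0 : 0 < c by rewrite divr_gt0 //; lra.
have [|y []//|d d0 q_unif] := @within_continuous_pair_unif_fst _ _ [set t | 0 < t] _ _
  q_cont a b _ _ (F_proper x r r_gt0) _ _ c0.
  by move=> t /andP[ta _] /=; lra.
exists d => // t s ht hs ts.
have t0 : 0 < t by case/andP: ht; lra.
have s0 : 0 < s by case/andP: hs; lra.
have mass_close : `|mass t - mass s| <= c * nuB.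
  have := abse_integralB_le nu (c := c) measurable_B (integrable_kernel _ t0)
    (integrable_kernel _ s0).
  rewrite !kernel_ball_massE // nuBE -EFinM lee_fin; apply.
  by move=> y /B_sub_cball /(q_unif _ _ _ ht hs) /(_ ts) /ltW.
have c_nuB : c * (nuB + 1) = e / 2 by rewrite /c; field; lra.
nra.
Qed.

End kernel_ball_mass.

Lemma unif_cvg_truncn_shift {R : realType} {f : nat -> nat -> R} {g : R -> R}
    {gamma : nat -> R} {a b : R} :
  0 <= a -> gamma @ \oo --> +oo ->
  (forall e, 0 < e -> exists2 d, 0 < d & forall t s, a <= t <= b + 1 ->
     a <= s <= b + 1 -> `|t - s| < d -> `|g t - g s| < e) ->
  (forall e, 0 < e -> \forall n \near \oo, forall t, a <= t <= b + 1 ->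
     `|f n (Num.truncn (gamma n * t)) - g t| < e) ->
  forall e, 0 < e -> \forall n \near \oo, forall t, a <= t <= b ->
    forall i, (i <= 1)%N -> `|f n (Num.truncn (gamma n * t) + i) - g t| < e.
Proof.
move=> a0 gamma_oo g_unif f_cvg e e0.
have e2 : 0 < e / 2 by lra.
have [d d0 gd] := g_unif (e / 2) e2.
have d'0 : 0 < d^-1 by rewrite invr_gt0.
have gamma_large : \forall n \near \oo, 1 + d^-1 <= gamma n.
  by move/cvgryPge: gamma_oo; apply.
apply: filterS2 (f_cvg _ e2) gamma_large => n f_n gamma_n t /andP[ta tb] [|[|//]] _.
  have /f_n : a <= t <= b + 1 by apply/andP; split; lra.
  rewrite addr0; lra.
have step_gt0 : 0 < (gamma n)^-1 by rewrite invr_gt0; lra.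
have step_lt1 : (gamma n)^-1 < 1 by rewrite invf_lt1; lra.
have step_ltd : (gamma n)^-1 < d by rewrite -[d]invrK ltf_pV2 ?posrE; lra.
set t' := t + (gamma n)^-1.
have -> : Num.truncn (gamma n * t) + 1 = Num.truncn (gamma n * t').
  have gamma_neq0 : gamma n != 0 by apply: lt0r_neq0; lra.
  rewrite mulrDr divff // [in RHS]addrC truncnD ?truncn1 1?addnC //.
  by rewrite nnegrE; apply: mulr_ge0; lra.
rewrite (splitr e); apply: le_lt_trans (ler_distD (g t') _ _) _.
apply: ltrD; first by apply: f_n; rewrite /t'; apply/andP; split; lra.
apply: gd; rewrite /t'; try by apply/andP; split; lra.
by rewrite addrAC subrr add0r gtr0_norm.
Qed.

Theorem lemma2p1 (R : realType) (E : pointedMetricType R) (F : set E)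
  (nu : {measure set (borel_of E) -> \bar R}) (rho : E)
  (q : R -> E -> R)
  (V : nat -> set E) (mu : nat -> E -> E -> R) (nbr : nat -> E -> seq E)
  (gamma : nat -> R) :
  (* setting *)
  (forall (x : E) (r : R), 0 < r -> compact (F `&` cball x r)) ->
  radon_full_support F nu ->
  F rho ->
  {within [set p : R * E | 0 < p.1 /\ F p.2], continuous (fun p : R * E => q p.1 p.2)} ->
  (forall t y, 0 < t -> F y -> 0 <= q t y) ->
  (forall t, 0 < t -> (\int[nu]_(y in F) (q t y)%:E = 1)%E) ->
  (forall n, weighted_graph (V n) (mu n) (nbr n)) ->
  (forall n, graph_connected (V n) (mu n)) ->
  (forall n, at_least_two_vertices (V n)) ->
  (forall n, V n rho) ->
  (forall n, 0 <= gamma n) ->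
  gamma @ \oo --> +oo ->
  (* condition (A1)(d) *)
  (forall a b : R, 0 < a -> a <= b -> forall x (r : R), F x -> 0 < r ->
     forall eps : R, 0 < eps -> \forall n \near \oo, forall t, a <= t <= b ->
       (`| (walk_prob (mu n) (nbr n) (Num.truncn (gamma n * t)) rho (ball x r))%:E
           - \int[nu]_(y in ball x r `&` F) (q t y)%:E | < eps%:E)%E) ->
  (* conclusion *)
  forall a b : R, 0 < a -> a <= b -> forall x (r : R), F x -> 0 < r ->
     forall eps : R, 0 < eps -> \forall n \near \oo, forall t, a <= t <= b ->
       forall i : nat, (i <= 1)%N ->
       (`| (walk_prob (mu n) (nbr n) (Num.truncn (gamma n * t) + i) rho (ball x r))%:E
           - \int[nu]_(y in ball x r `&` F) (q t y)%:E | < eps%:E)%E.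
Proof.
move=> F_proper nu_radon _ q_cont q_ge0 q_mass1 _ _ _ _ _ gamma_oo A1d
  a b a0 ab x r Fx r0.
pose g := kernel_ball_mass F nu q x r.
have massE := kernel_ball_massE F_proper q_cont q_ge0 q_mass1 x r.
have g_unif := kernel_ball_mass_unif_continuous F_proper nu_radon q_cont q_ge0 q_mass1
  x r r0 a (b + 1) a0.
have f_cvg : forall e, 0 < e -> \forall n \near \oo, forall t, a <= t <= b + 1 ->
    `|walk_prob (mu n) (nbr n) (Num.truncn (gamma n * t)) rho (ball x r) - g t| < e.
  move=> e e0; have ab1 : a <= b + 1 by lra.
  apply: filterS (A1d a (b + 1) a0 ab1 x r Fx r0 e e0) => n A1n t ht.
  by have := A1n t ht; rewrite massE ?lte_fin //; case/andP: ht; lra.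
move=> e e0.
have := unif_cvg_truncn_shift
  (f := fun n k => walk_prob (mu n) (nbr n) k rho (ball x r)) (ltW a0) gamma_oo g_unif f_cvg e e0.
apply: filterS => n shift_n t ht i i1; rewrite massE ?lte_fin; first exact: shift_n.
by case/andP: ht; lra.
Qed.
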